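(* For $a,b\ge1$ and $P=[a]\times[b]$, we have $\sum_{p\in P}\mathbb{1}_p\equiv \frac{ab}{2}$.
   Context: $[a]\times[b]=\{(i,j)\colon 1\le i\le a,\ 1\le j\le b\}$ with $(i,j)\le(i',j')$ iff $i\le i'$ and $j\le j'$. $\mathcal{J}(P)$ is the set of order ideals of $P$. For $x\in P$, $I\in\mathcal{J}(P)$: $\mathbb{1}_x(I)=1$ if $x\in I$, else $0$; $T_x^+(I)=1$ if $x$ is a minimal element of $P\setminus I$, else $0$; $T_x^-(I)=1$ if $x$ is a maximal element of $I$, else $0$; $T_x=T_x^+-T_x^-$. For $f,g\colon\mathcal{J}(P)\to\mathbb{R}$, $f\equiv g$ means $f-g=\sum_{x\in P}c_xT_x$ for some real constants $c_x$; a real number denotes the corresponding constant function. *)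

From mathcomp Require Import all_boot all_order all_algebra.
From mathcomp Require Import reals.
Set Implicit Arguments. Unset Strict Implicit. Unset Printing Implicit Defensive.
Import Order.TTheory GRing.Theory Num.Theory.
Local Open Scope ring_scope.

(* The poset [a] x [b]; element (i,j) with 0-indexed ordinals i : 'I_a, j : 'I_b
   stands for (i+1, j+1).  Product order. *)
Definition grid (a b : nat) := ('I_a * 'I_b)%type.

Definition gle (a b : nat) (p q : grid a b) : bool :=
  ((p.1 <= q.1)%N && (p.2 <= q.2)%N).

Definition is_ideal (a b : nat) (I : {set grid a b}) : bool :=
  [forall p : grid a b, forall q : grid a b, (gle p q && (q \in I)) ==> (p \in I)].

Section Toggles.
Variables (R : realType) (a b : nat).

Definition ind (x : grid a b) (I : {set grid a b}) : R := (x \in I)%:R.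

Definition Tplus (x : grid a b) (I : {set grid a b}) : R :=
  ((x \notin I) && [forall y : grid a b, ((y \notin I) && gle y x) ==> (y == x)])%:R.

Definition Tminus (x : grid a b) (I : {set grid a b}) : R :=
  ((x \in I) && [forall y : grid a b, ((y \in I) && gle x y) ==> (y == x)])%:R.

Definition Tog (x : grid a b) (I : {set grid a b}) : R := Tplus x I - Tminus x I.

Definition toggle_equiv (f g : {set grid a b} -> R) : Prop :=
  exists c : grid a b -> R, forall I : {set grid a b}, is_ideal I ->
    f I - g I = \sum_(x : grid a b) c x * Tog x I.
End Toggles.

From mathcomp Require Import all_boot all_order all_algebra.
From mathcomp Require Import reals.
From mathcomp Require Import ring zify.
Import Order.TTheory GRing.Theory Num.Theory.
Local Open Scope ring_scope.
Set Implicit Arguments. Unset Strict Implicit. Unset Printing Implicit Defensive.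

(* An order ideal I of [a] x [b] is a staircase given by its row lengths
   b = L_0 >= L_1 >= ... >= L_a >= L_(a+1) = 0, row i having length L_(i+1).
   Row i contains at most one minimal element of P \ I, the addable cell
   (i, L_(i+1)), present iff L_(i+1) < L_i, and at most one maximal element of
   I, the removable cell (i, L_(i+1) - 1), present iff L_(i+2) < L_(i+1).
   Take c_(i,j) = g (j - i) with g z = (z + a)(z - b)/2.  Then the toggle sum of
   row i is L_(i+1) + P_(i+1) - P_i for the potential
   P_k = [L_(k+1) = L_k] g (L_k - k) + k (a - b - k)/2, and since g b = g (-a) = 0
   we get P_0 = 0 and P_a = -ab/2; summing over the rows gives |I| - ab/2. *)

Lemma card_ord_ltn n m : (m <= n)%N -> #|[set k : 'I_n | (k < m)%N]| = m.
Proof.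
move=> le_mn; rewrite -sum1_card (eq_bigl (fun k : 'I_n => (k < m)%N)) => [|k].
  by rewrite -(big_ord_widen _ (fun _ => 1%N) le_mn) sum1_card card_ord.
by rewrite !inE.
Qed.

Lemma mem_downclosed_card n (S : {set 'I_n}) :
  (forall j k : 'I_n, (k <= j)%N -> j \in S -> k \in S) ->
  forall j : 'I_n, (j \in S) = (j < #|S|)%N.
Proof.
move=> S_down j; apply/idP/idP => [jS | lt_jS].
  have: [set k : 'I_n | (k < j.+1)%N] \subset S.
    by apply/subsetP => k; rewrite inE ltnS => /S_down; apply.
  by move/subset_leq_card; rewrite card_ord_ltn.
apply: contraTT lt_jS => jNS; rewrite -leqNgt.
have: S \subset [set k : 'I_n | (k < j)%N].
  apply/subsetP => k kS; rewrite inE ltnNge.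
  by apply: contra jNS => le_jk; apply: S_down kS.
by move/subset_leq_card; rewrite card_ord_ltn // ltnW.
Qed.

Lemma sum_ord_mul_eq_indicator (R : pzSemiRingType) n (F : nat -> R) m :
  \sum_(j < n) F j * (j == m :> nat)%:R = if (m < n)%N then F m else 0.
Proof.
under eq_bigr => j _ do rewrite mulr_natr mulrb.
by rewrite -big_mkcond big_ord1_eq.
Qed.

Lemma sum_grid (R : nmodType) a b (F : grid a b -> R) :
  \sum_(p : grid a b) F p = \sum_(i < a) \sum_(j < b) F (i, j).
Proof. by rewrite pair_bigA; apply: eq_bigr => -[]. Qed.

Section StaircaseSum.
Variables (R : numFieldType) (a b : nat).

Definition stair_coef (z : R) : R := (z + a%:R) * (z - b%:R) / 2.

Variable L : nat -> nat.

Definition addable_term (i : nat) : R :=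
  (L i.+1 < L i)%N%:R * stair_coef ((L i.+1)%:R - i%:R).

Definition removable_term (i : nat) : R :=
  (L i.+2 < L i.+1)%N%:R * stair_coef ((L i.+1)%:R - i.+1%:R).

Definition stair_potential (k : nat) : R :=
  (L k.+1 == L k)%:R * stair_coef ((L k)%:R - k%:R)
  + k%:R * (a%:R - b%:R - k%:R) / 2.

Lemma addable_sub_removable i : (L i.+2 <= L i.+1 <= L i)%N ->
  addable_term i - removable_term i
  = (L i.+1)%:R + stair_potential i.+1 - stair_potential i.
Proof.
rewrite /addable_term /removable_term /stair_potential /stair_coef.
case/andP; rewrite leq_eqVlt => /orP[/eqP e2 | lt2].
all: rewrite leq_eqVlt => /orP[/eqP e1 | lt1].
- by rewrite e2 -e1 ltnn eqxx /=; field.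
- by rewrite e2 lt1 ltnn eqxx (ltn_eqF lt1) /=; field.
- by rewrite -e1 lt2 ltnn eqxx (ltn_eqF lt2) /=; field.
- by rewrite lt1 lt2 (ltn_eqF lt1) (ltn_eqF lt2) /=; field.
Qed.

Lemma sum_addable_sub_removable :
  (forall k, L k.+1 <= L k)%N -> L 0 = b -> L a.+1 = 0%N ->
  \sum_(i < a) (addable_term i - removable_term i)
  = \sum_(i < a) (L i.+1)%:R - (a * b)%:R / 2.
Proof.
move=> L_anti L0 La.
under eq_bigr => i _ do rewrite addable_sub_removable ?L_anti // -addrA.
rewrite big_split /=.
rewrite -(big_mkord xpredT (fun k => stair_potential k.+1 - stair_potential k)).
rewrite telescope_sumr // /stair_potential /stair_coef L0 La.
by case: eqP => [<-|_] /=; rewrite natrM; field.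
Qed.

End StaircaseSum.

Section Rows.
Variables (a b : nat).
Implicit Types (I : {set grid a b}).

Definition row I (i : nat) : {set 'I_b} :=
  [set j | [exists i' : 'I_a, (i' == i :> nat) && ((i', j) \in I)]].

(* [rowlen I k.+1] is the length of row k; [rowlen I 0 = b] is a virtual full
   row above the first one. *)
Definition rowlen I (k : nat) : nat := if k is i.+1 then #|row I i| else b.
Arguments rowlen : simpl never.

Lemma rowlen0 I : rowlen I 0 = b. Proof. by []. Qed.

Lemma mem_row I (i : 'I_a) j : (j \in row I i) = ((i, j) \in I).
Proof.
rewrite inE; apply/existsP/idP => [[i' /andP[/eqP/val_inj-> //]] | iI].
by exists i; rewrite eqxx.
Qed.

Lemma rowlen_after_last I : rowlen I a.+1 = 0%N.
Proof.
apply: eq_card0 => j; rewrite inE; apply/existsP => -[i /andP[/eqP ei _]].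
by have := ltn_ord i; rewrite ei ltnn.
Qed.

Lemma ideal_downclosed I :
  is_ideal I -> forall p q, gle p q -> q \in I -> p \in I.
Proof.
move=> /forallP I_ideal p q le_pq qI.
by have /forallP/(_ q)/implyP := I_ideal p; apply; rewrite le_pq.
Qed.

Variable I : {set grid a b}.
Hypothesis I_ideal : is_ideal I.

Lemma rowlen_succ_le k : (rowlen I k.+1 <= rowlen I k)%N.
Proof.
case: k => [|k] /=; first by rewrite -[X in (_ <= X)%N]card_ord max_card.
apply/subset_leq_card/subsetP => j; rewrite !inE => /existsP[i /andP[/eqP ei iI]].
have lt_ka : (k < a)%N by apply: ltnW; rewrite -ei.
apply/existsP; exists (Ordinal lt_ka); rewrite eqxx /=.
by apply: (ideal_downclosed I_ideal _ iI); rewrite /gle /= ei leqnSn leqnn.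
Qed.

Lemma rowlen_antitone k l : (k <= l)%N -> (rowlen I l <= rowlen I k)%N.
Proof.
apply: (homo_leq (r := fun m n => (n <= m)%N)) => [//|y x z le_yx le_zy|m].
  exact: leq_trans le_zy le_yx.
exact: rowlen_succ_le.
Qed.

Lemma rowlen_le k : (rowlen I k <= b)%N.
Proof. exact: (rowlen_antitone (leq0n k)). Qed.

Lemma mem_ideal (i : 'I_a) (j : 'I_b) : ((i, j) \in I) = (j < rowlen I i.+1)%N.
Proof.
rewrite -mem_row; apply: mem_downclosed_card => j' k le_kj'.
by rewrite !mem_row; apply: (ideal_downclosed I_ideal); rewrite /gle /= leqnn.
Qed.

Variable R : realType.

Lemma Tplus_rowlen (i : 'I_a) (j : 'I_b) :
  Tplus R (i, j) I
  = ((j == rowlen I i.+1 :> nat) && (rowlen I i.+1 < rowlen I i))%N%:R.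
Proof.
rewrite /Tplus mem_ideal // -leqNgt; congr ((nat_of_bool _)%:R).
apply/andP/andP => [[le_Lj /forallP min_ij] | [/eqP j_eq lt_L]].
  have below_in i' j' :
      gle (i', j') (i, j) -> (i', j') != (i, j) -> (j' < rowlen I i'.+1)%N.
    move=> le_ij' ne_ij'; rewrite -mem_ideal //; apply: contraR ne_ij' => ij'NI.
    by have /implyP := min_ij (i', j'); apply; rewrite ij'NI.
  split.
    rewrite eqn_leq le_Lj andbT; case: (posnP j) => [-> // | j_gt0].
    have lt_jb : (j.-1 < b)%N by have := ltn_ord j; lia.
    have := below_in i (Ordinal lt_jb).
    by rewrite /gle /= xpair_eqE eqxx -val_eqE /=; lia.
  clear min_ij; case: i below_in le_Lj => -[|i] lt_ia below_in /= le_Lj.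
    by rewrite rowlen0; have := ltn_ord j; lia.
  have lt_ia' : (i < a)%N by lia.
  have := below_in (Ordinal lt_ia') j.
  by rewrite /gle /= xpair_eqE eqxx -val_eqE /= andbT; lia.
split; first by rewrite j_eq.
apply/forallP => -[i' j']; apply/implyP.
rewrite mem_ideal // -leqNgt /gle /= => /and3P[le_Lj' le_i'i le_j'j].
have anti := rowlen_antitone.
have e_i : i' = i :> nat.
  apply/eqP; rewrite eqn_leq le_i'i /= leqNgt; apply/negP => lt_i'i.
  by have := anti i'.+1 i lt_i'i; lia.
by rewrite xpair_eqE -!val_eqE /= e_i eqxx /=; rewrite e_i in le_Lj'; lia.
Qed.

Lemma Tminus_rowlen (i : 'I_a) (j : 'I_b) :
  Tminus R (i, j) I
  = ((j.+1 == rowlen I i.+1) && (rowlen I i.+2 < rowlen I i.+1))%N%:R.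
Proof.
rewrite /Tminus mem_ideal //; congr ((nat_of_bool _)%:R).
apply/andP/andP => [[lt_jL /forallP max_ij] | [/eqP j_eq lt_L]].
  have above_out i' j' :
      gle (i, j) (i', j') -> (i', j') != (i, j) -> (rowlen I i'.+1 <= j')%N.
    move=> le_ij' ne_ij'; rewrite leqNgt -mem_ideal //; apply: contra ne_ij' => ij'I.
    by have /implyP := max_ij (i', j'); apply; rewrite ij'I.
  split.
    rewrite eqn_leq lt_jL /=; case: (ltnP j.+1 b) => [lt_j1b | ].
      have := above_out i (Ordinal lt_j1b).
      by rewrite /gle /= xpair_eqE eqxx -val_eqE /=; lia.
    by have := rowlen_le i.+1; lia.
  case: (ltnP i.+1 a) => [lt_i1a | le_ai1].
    have := above_out (Ordinal lt_i1a) j.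
    by rewrite /gle /= xpair_eqE eqxx -val_eqE /= andbT; lia.
  have -> : i.+2 = a.+1 by have := ltn_ord i; lia.
  by rewrite rowlen_after_last; lia.
split; first by rewrite j_eq.
apply/forallP => -[i' j']; apply/implyP.
rewrite mem_ideal // /gle /= => /and3P[lt_j'L le_ii' le_jj'].
have anti := rowlen_antitone.
have e_i : i' = i :> nat.
  apply/eqP; rewrite eqn_leq le_ii' andbT leqNgt; apply/negP => lt_ii'.
  by have := anti i.+2 i'.+1 lt_ii'; lia.
by rewrite xpair_eqE -!val_eqE /= e_i eqxx /=; rewrite e_i in lt_j'L; lia.
Qed.

Lemma sum_row_ind (i : 'I_a) : \sum_(j < b) ind R (i, j) I = (rowlen I i.+1)%:R.
Proof.
under eq_bigr => j _ do rewrite /ind -mem_row mulrb.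
by rewrite -big_mkcond sumr_const.
Qed.

Lemma sum_row_Tplus (i : 'I_a) :
  \sum_(j < b) stair_coef a b (j%:R - i%:R) * Tplus R (i, j) I
  = addable_term R a b (rowlen I) i.
Proof.
under eq_bigr => j _ do rewrite Tplus_rowlen -mulnb natrM mulrA.
rewrite -mulr_suml.
rewrite (@sum_ord_mul_eq_indicator _ _ (fun j => stair_coef a b (j%:R - i%:R))).
rewrite /addable_term mulrC; case: (ltnP _ b) => [// | le_bL].
by rewrite ltnNge (leq_trans (rowlen_le i) le_bL) /= !mul0r.
Qed.

Lemma sum_row_Tminus (i : 'I_a) :
  \sum_(j < b) stair_coef a b (j%:R - i%:R) * Tminus R (i, j) I
  = removable_term R a b (rowlen I) i.
Proof.
under eq_bigr => j _ do rewrite Tminus_rowlen -mulnb natrM mulrA.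
rewrite -mulr_suml /removable_term mulrC.
case lt_L : (rowlen I i.+2 < rowlen I i.+1)%N; last by rewrite !mul0r.
have L_pos : (0 < rowlen I i.+1)%N by apply: leq_ltn_trans lt_L.
move: (rowlen_le i.+1); rewrite -(prednK L_pos); set m := (rowlen I i.+1).-1 => le_m1b.
under eq_bigr => j _ do rewrite eqSS.
rewrite (@sum_ord_mul_eq_indicator _ _ (fun j => stair_coef a b (j%:R - i%:R))) le_m1b.
by congr (_ * stair_coef _ _ _); rewrite -!natr1 opprD addrACA subrr addr0.
Qed.

Lemma sum_row_Tog (i : 'I_a) :
  \sum_(j < b) stair_coef a b (j%:R - i%:R) * Tog R (i, j) I
  = addable_term R a b (rowlen I) i - removable_term R a b (rowlen I) i.
Proof.
under eq_bigr => j _ do rewrite mulrBr.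
by rewrite sumrB sum_row_Tplus sum_row_Tminus.
Qed.

End Rows.

Theorem corollary3p11 (R : realType) (a b : nat) :
  (1 <= a)%N -> (1 <= b)%N ->
  toggle_equiv (fun I => \sum_(p : grid a b) ind R p I)
               (fun _ => (a * b)%:R / 2 : R).
Proof.
move=> _ _.
exists (fun p : grid a b => stair_coef a b ((p.2 : nat)%:R - (p.1 : nat)%:R)).
move=> I I_ideal.
rewrite !sum_grid.
under eq_bigr => i _ do rewrite sum_row_ind.
under [X in _ = X]eq_bigr => i _ do rewrite sum_row_Tog //.
rewrite sum_addable_sub_removable //.
  exact: rowlen_succ_le.
exact: rowlen_after_last.
Qed.
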